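(* Let $D:V\to\mathbb{N}$ be a pebble distribution on the infinite square grid (vertex set $\mathbb{Z}^2$, with $u,v$ adjacent iff they differ by $1$ in exactly one coordinate) such that $W_D(u)\ge 1$ for every vertex $u$. If a vertex $v$ satisfies $D(v)=k\ge 1$, then the excess weight at $v$ satisfies $\widehat W_D(v)\ge \frac{12}{25}k$.
   Context: For a distribution $D$, the weight function is $W_D(u)=\sum_{w}D(w)2^{-d(u,w)}$, where $d$ is graph distance (here the $\ell_1$ distance on $\mathbb{Z}^2$). The excess weight is $\widehat W_D(u)=W_D(u)-1$ if $W_D(u)>1$ and $\widehat W_D(u)=W_D(u)$ if $W_D(u)\le 1$. *)

From mathcomp Require Import all_boot all_order all_algebra.
From mathcomp Require Import all_classical all_reals all_analysis.
Set Implicit Arguments. Unset Strict Implicit. Unset Printing Implicit Defensive.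
Import Order.TTheory GRing.Theory Num.Theory.
Local Open Scope classical_set_scope.
Local Open Scope ring_scope.

Definition vertex := (int * int)%type.

(* Graph distance on the square grid = l1 distance. *)
Definition grid_dist (u w : vertex) : nat := (`|u.1 - w.1|%N + `|u.2 - w.2|%N)%N.

Definition weight (R : realType) (D : vertex -> nat) (u : vertex) : \bar R :=
  \esum_(w in [set: vertex]) (((D w)%:R * (2^-1) ^+ grid_dist u w : R)%:E).

Definition excess_weight (R : realType) (D : vertex -> nat) (u : vertex) : \bar R :=
  if (1%:E < weight R D u)%E then (weight R D u - 1%:E)%E else weight R D u.

From mathcomp Require Import all_boot all_order all_algebra.
From mathcomp Require Import all_classical all_reals all_analysis.
From mathcomp Require Import ring lra zify.
Import Order.TTheory GRing.Theory Num.Theory.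
Local Open Scope ring_scope.

(* Summing 2^-d(u, .) over the four diagonal neighbours u of v factors as a
   product of one-dimensional sums, each at most 5/2 times 2^-|a|; hence that
   sum is at most (25/4) 2^-d(v, .), and at the point v itself it is 1, short
   of 25/4 by 21/4.  Weighting by D and using W_D(u) >= 1 at the neighbours gives
   25 W_D(v) >= 4 * 4 + 21 k, so W_D(v) > 1 and W_D(v) - 1 >= (21 k - 9)/25,
   which is at least 12 k / 25 because k >= 1. *)

Lemma halfpow_neighbours_le (R : realFieldType) (a : int) :
  (2^-1 : R) ^+ absz (a + -1) + (2^-1) ^+ absz (a + 1) <= 5/2 * (2^-1) ^+ absz a.
Proof.
case: a => n.
- case: n => [|n]; first by rewrite /= expr1 expr0; lra.
  have -> : absz (Posz n.+1 + -1) = n by lia.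
  have -> : absz (Posz n.+1 + 1) = n.+2 by lia.
  have : 0 <= (2^-1 : R) ^+ n by rewrite exprn_ge0 // invr_ge0.
  rewrite !exprS /=; lra.
- have -> : absz (Negz n + -1) = n.+2 by lia.
  have -> : absz (Negz n + 1) = n by lia.
  have -> : absz (Negz n) = n.+1 by lia.
  have : 0 <= (2^-1 : R) ^+ n by rewrite exprn_ge0 // invr_ge0.
  rewrite !exprS /=; lra.
Qed.

Section Esum.
Variables (R : realType) (T : choiceType).

Lemma ge0_esum_natmull (I : set T) (a : T -> \bar R) (n : nat) :
  (forall i, I i -> (0 <= a i)%E) ->
  (\esum_(i in I) (n%:R%:E * a i) = n%:R%:E * \esum_(i in I) a i)%E.
Proof.
move=> a0; elim: n => [|n IHn].
  by rewrite mul0e; apply: esum1 => i _; rewrite mul0e.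
have natS : (n.+1%:R%:E = n%:R%:E + 1 :> \bar R)%E by rewrite -natr1 EFinD.
under eq_esum => i Ii do rewrite natS ge0_muleDl ?lee_fin // mul1e.
rewrite esumD; last 2 first.
- by move=> i Ii; rewrite mule_ge0 ?lee_fin ?a0.
- exact: a0.
by rewrite IHn natS ge0_muleDl ?lee_fin ?esum_ge0 // mul1e.
Qed.

Lemma esum_delta (v : T) (c : R) : 0 <= c ->
  (\esum_(w in [set: T]) (if w == v then c else 0)%:E = c%:E)%E.
Proof.
move=> c0; rewrite -(@esum_set1 R T v (fun _ => c%:E)) ?lee_fin //.
rewrite [RHS]esum_mkcond; apply: eq_esum => w _.
case: (eqVneq w v) => [->|nwv]; first by rewrite mem_set.
by rewrite memNset //=; apply/eqP.
Qed.

End Esum.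

Section DiagonalNeighbours.
Variables (R : realType) (D : vertex -> nat).

Definition weight_term (u w : vertex) : R := (D w)%:R * (2^-1) ^+ grid_dist u w.

Lemma weight_term_ge0 u w : 0 <= weight_term u w.
Proof. by rewrite mulr_ge0 // exprn_ge0 // invr_ge0. Qed.

Lemma weightE u : weight R D u = (\esum_(w in [set: vertex]) (weight_term u w)%:E)%E.
Proof. by []. Qed.

Lemma weight_term_shift (v w : vertex) (s t : int) :
  weight_term (v.1 + s, v.2 + t) w =
  (D w)%:R * ((2^-1) ^+ absz (v.1 - w.1 + s) * (2^-1) ^+ absz (v.2 - w.2 + t)).
Proof. by rewrite /weight_term -exprD /grid_dist /=; congr (_ * _ ^+ _); lia. Qed.

Definition diag_term (v w : vertex) : R :=
  weight_term (v.1 + 1, v.2 + 1) w + weight_term (v.1 + 1, v.2 + -1) w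
  + weight_term (v.1 + -1, v.2 + 1) w + weight_term (v.1 + -1, v.2 + -1) w.

Lemma diag_termE (v w : vertex) :
  diag_term v w = (D w)%:R *
    (((2^-1) ^+ absz (v.1 - w.1 + -1) + (2^-1) ^+ absz (v.1 - w.1 + 1)) *
     ((2^-1) ^+ absz (v.2 - w.2 + -1) + (2^-1) ^+ absz (v.2 - w.2 + 1))).
Proof. by rewrite /diag_term !weight_term_shift; ring. Qed.

Lemma diag_term_le (v w : vertex) :
  4 * diag_term v w + (if w == v then 21 * (D v)%:R else 0) <= 25 * weight_term v w.
Proof.
have h0 n : 0 <= (2^-1 : R) ^+ n by rewrite exprn_ge0 // invr_ge0.
case: (eqVneq w v) => [->|_].
  rewrite diag_termE /weight_term /grid_dist !subrr /= !expr1 !expr0; lra.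
have -> : weight_term v w = (D w)%:R *
    ((2^-1) ^+ absz (v.1 - w.1) * (2^-1) ^+ absz (v.2 - w.2)).
  by rewrite /weight_term -exprD.
rewrite diag_termE addr0.
have hx := halfpow_neighbours_le R (v.1 - w.1).
have hy := halfpow_neighbours_le R (v.2 - w.2).
have -> : 25 * ((D w)%:R * ((2^-1) ^+ absz (v.1 - w.1) * (2^-1) ^+ absz (v.2 - w.2)))
    = 4 * ((D w)%:R * (5/2 * (2^-1) ^+ absz (v.1 - w.1) * (5/2 * (2^-1) ^+ absz (v.2 - w.2)))) :> R
  by field.
by rewrite !ler_wpM2l // ler_pM ?addr_ge0.
Qed.

Lemma diag_weight_le (v : vertex) :
  (4%:E * (weight R D (v.1 + 1, v.2 + 1)%R + weight R D (v.1 + 1, v.2 + -1)%R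
            + weight R D (v.1 + -1, v.2 + 1)%R + weight R D (v.1 + -1, v.2 + -1)%R)
   + (21 * (D v)%:R)%:E <= 25%:E * weight R D v)%E.
Proof.
have t0 := weight_term_ge0.
rewrite !weightE -!esumD; try by move=> i _; rewrite -?EFinD lee_fin ?addr_ge0.
under eq_esum => i _ do rewrite -!EFinD.
rewrite -(@ge0_esum_natmull _ _ _ _ 4) -?(@ge0_esum_natmull _ _ _ _ 25); last 2 first.
- by move=> i _; rewrite lee_fin.
- by move=> i _; rewrite lee_fin !addr_ge0.
rewrite -(@esum_delta R vertex v (21 * (D v)%:R)) ?mulr_ge0 //.
rewrite -esumD; last 2 first.
- by move=> i _; rewrite -EFinM lee_fin mulr_ge0 // !addr_ge0.
- by move=> i _; rewrite lee_fin; case: ifP => // _; rewrite mulr_ge0.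
apply: le_esum => w _; rewrite -!EFinM -EFinD lee_fin.
exact: diag_term_le.
Qed.

End DiagonalNeighbours.

Theorem mainTheorem5 (R : realType) (D : vertex -> nat)
  (hW : forall u : vertex, (1%:E <= weight R D u)%E)
  (v : vertex) (k : nat) (hk : (1 <= k)%N) (hDv : D v = k) :
  (((12 / 25 : R) * k%:R)%:E <= excess_weight R D v)%E.
Proof.
have hdiag := diag_weight_le R D v; rewrite hDv in hdiag.
have hnbrs : (4%:E <= weight R D (v.1 + 1, v.2 + 1)%R + weight R D (v.1 + 1, v.2 + -1)%R
    + weight R D (v.1 + -1, v.2 + 1)%R + weight R D (v.1 + -1, v.2 + -1)%R)%E.
  have -> : (4%:E = 1%:E + 1%:E + 1%:E + 1%:E :> \bar R)%E.
    by rewrite -!EFinD; congr (_%:E); lra.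
  by rewrite !leeD.
have hk1 : 1 <= k%:R :> R by rewrite ler1n.
rewrite /excess_weight; move: hdiag (hW v).
case: (weight R D v) => [r| |] hdiag hv; last by [].
- have : ((4 * 4 + 21 * k%:R)%:E <= (25 * r)%:E :> \bar R)%E.
    apply: le_trans hdiag; rewrite EFinD leeD2r // EFinM.
    by apply: lee_pmul; rewrite ?lee_fin.
  rewrite lee_fin => hr.
  have -> : (1%:E < r%:E :> \bar R)%E by rewrite lte_fin; lra.
  by rewrite -EFinB lee_fin; lra.
- by rewrite ltry leey.
Qed.
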